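(* Let $(X,d)$ be a compact metric space and $F:X\to 2^X$ a continuous set-valued map. Then the projection $\pi_0:\mathrm{Orb}_r(X)\to X$, $\pi_0((x_n))=x_0$, is an open map (with $\mathrm{Orb}_r(X)$ carrying the subspace topology of the product topology).
   Context: $2^X$ is the family of nonempty compact subsets of $X$. A set-valued map $F:X\to 2^X$ is upper semicontinuous if for every $x$ and open $U\supset F(x)$ there is a neighborhood $V$ of $x$ with $F(y)\subset U$ for $y\in V$; lower semicontinuous if for every $x$ and open $U$ with $F(x)\cap U\ne\emptyset$ there is a neighborhood $V$ of $x$ with $F(y)\cap U\neq\emptyset$ for $y\in V$; continuous if both. $\mathrm{Orb}_r(X)=\{(x_0,x_1,\dots)\in X^{\mathbb N}: x_{n+1}\in F(x_n)\ \forall n\}$. *)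

From HB Require Import structures.
From mathcomp Require Import all_boot all_order all_algebra.
From mathcomp Require Import all_classical all_reals all_analysis.
Set Implicit Arguments. Unset Strict Implicit. Unset Printing Implicit Defensive.
Import Order.TTheory GRing.Theory Num.Theory.
Local Open Scope classical_set_scope.

Definition nonempty_compact_valued {T : topologicalType} (F : T -> set T) :=
  forall x, F x !=set0 /\ compact (F x).

Definition usc_map {T : topologicalType} (F : T -> set T) :=
  forall x (U : set T), open U -> F x `<=` U ->
    exists V, [/\ open V, V x & forall y, V y -> F y `<=` U].

Definition lsc_map {T : topologicalType} (F : T -> set T) :=
  forall x (U : set T), open U -> F x `&` U !=set0 ->
    exists V, [/\ open V, V x & forall y, V y -> F y `&` U !=set0].

Definition continuous_map {T : topologicalType} (F : T -> set T) :=
  usc_map F /\ lsc_map F.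

Definition Orb {T : topologicalType} (F : T -> set T) : set {ptws nat -> T} :=
  [set s | forall n, F (s n) (s n.+1)].

Definition pi0 {T : topologicalType} (s : {ptws nat -> T}) : T := s 0%N.

From HB Require Import structures.
From mathcomp Require Import all_boot all_order all_algebra.
From mathcomp Require Import all_classical all_reals all_analysis.
Import Order.TTheory GRing.Theory Num.Theory.
Local Open Scope classical_set_scope.
Local Open Scope ring_scope.

(* Only lower semicontinuity and nonemptiness of the values matter.  An open
   set of orbits around an orbit s contains all orbits staying e-close to s up
   to some time N.  By lower semicontinuity, starting from any y close enough
   to s 0 one can choose successively t 1 in F y close to s 1, ..., t N close to
   s N, and then continue the orbit arbitrarily; so a whole ball around s 0
   lies in the image of the projection. *)

Section PointwiseCylinder.
Context {R : realType} {X : pseudoMetricType R}.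

Lemma open_ptws_cylinder {U : set {ptws nat -> X}} {s : {ptws nat -> X}} :
  open U -> U s ->
  exists N : nat, exists2 e : R, 0 < e & forall t : {ptws nat -> X},
    (forall i, (i <= N)%N -> ball (s i) e (t i)) -> U t.
Proof.
move=> oU Us; apply: contrapT => noN.
(* Otherwise pick t_N outside U that is 1/(N+1)-close to s on [0, N]; then
   t_N converges pointwise to s, hence eventually enters U. *)
have /choice[t Ht] : forall N : nat, exists t : {ptws nat -> X},
    (forall i, (i <= N)%N -> ball (s i) N.+1%:R^-1 (t i)) /\ ~ U t.
  move=> N; apply: contrapT => nt; apply: noN; exists N, N.+1%:R^-1 => // u Hu.
  by apply: contrapT => nUu; apply: nt; exists u.
have t_cvg : t @ \oo --> s.
  apply/(pointwise_cvgP _ (fmap_filter _ _)) => i.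
  apply/(cvg_ballP (fun N => t N i)) => e e0; near=> N.
  apply: (@le_ball _ _ _ N.+1%:R^-1); last first.
    by apply: (Ht N).1; near: N; exact: nbhs_infty_ge.
  by apply/ltW; near: N; exact: (near_infty_natSinv_lt (PosNum e0)).
have [M _ UtM] : \forall N \near \oo, U (t N).
  by apply: t_cvg; apply: open_nbhs_nbhs.
exact: (Ht M).2 (UtM M (leqnn M)).
Unshelve. all: by end_near. Qed.

End PointwiseCylinder.

Section LowerSemicontinuousOrbits.
Context {R : realType} {X : pseudoMetricType R} {F : X -> set X}.

Lemma exists_orbit_from : (forall x, F x !=set0) ->
  forall y, exists t : nat -> X, t 0%N = y /\ forall n, F (t n) (t n.+1).
Proof.
by move=> /choice[g Fg] y; exists (fun n => iter n g y); split.
Qed.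

Lemma lsc_map_ball {x z : X} {r : R} : lsc_map F -> F x z -> 0 < r ->
  exists2 d : R, 0 < d & forall y, ball x d y -> exists2 z', F y z' & ball z r z'.
Proof.
move=> lscF Fxz r0.
have [|V [oV Vx FV]] := lscF x _ (@open_interior _ (ball z r)).
  by exists z; split => //; apply: nbhs_singleton; apply: nbhs_interior;
    exact: nbhsx_ballx.
have /nbhs_ballP[d d0 dV] : nbhs x V by exact: open_nbhs_nbhs.
exists d => // y /dV /FV [z' [Fyz' /interior_subset zz']].
by exists z'.
Qed.

Lemma lsc_orbit_tracking (N : nat) (s : nat -> X) {e : R} :
  (forall x, F x !=set0) -> lsc_map F -> 0 < e ->
  (forall n, F (s n) (s n.+1)) ->
  exists2 d : R, 0 < d & forall y, ball (s 0%N) d y ->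
    exists t : nat -> X, [/\ t 0%N = y, forall n, F (t n) (t n.+1) &
      forall i, (i <= N)%N -> ball (s i) e (t i)].
Proof.
move=> Fne lscF e0; elim: N s => [|N IH] s Os.
  exists e => // y sy; have [t [t0 Ot]] := exists_orbit_from Fne y.
  by exists t; split => // i; rewrite leqn0 => /eqP ->; rewrite t0.
have [d' d'0 track] := IH (fun n => s n.+1) (fun n => Os n.+1).
have [d'' d''0 near_s1] := lsc_map_ball lscF (Os 0%N) d'0.
exists (Num.min d'' e); first by rewrite lt_min d''0 e0.
move=> y sy; have [z Fyz s1z] : exists2 z, F y z & ball (s 1%N) d' z.
  by apply: near_s1; apply: le_ball sy; rewrite ge_min lexx.
have [t [t0 Ot st]] := track z s1z.
exists (fun n => if n is n'.+1 then t n' else y); split => //.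
  by case=> [|n] /=; [rewrite t0 | exact: Ot].
case=> [_|i]; last by rewrite ltnS; exact: st.
by apply: le_ball sy; rewrite ge_min lexx orbT.
Qed.

End LowerSemicontinuousOrbits.

Theorem corollary3p3 (R : realType) (X : metricType R)
  (F : X -> set X) :
  compact [set: X] ->
  nonempty_compact_valued F ->
  continuous_map F ->
  forall U : set {ptws nat -> X}, open U -> open (pi0 @` (U `&` Orb F)).
Proof.
move=> _ ncF [_ lscF] U oU; rewrite openE => _ [s [Us Os] <-].
have [N [e e0 cylU]] := open_ptws_cylinder oU Us.
have [d d0 track] :=
  lsc_orbit_tracking N s (fun x => (ncF x).1) lscF e0 Os.
apply/nbhs_ballP; exists d => // y /track [t [t0 Ot st]].
by exists t => //; split => //; apply: cylU.
Qed.
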